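(* Let $G$ be a connected weighted multigraph on the vertex set $V$, $|V|=n\ge 2$, with positive edge weights, weighted adjacency matrix $A$ and spectral radius $\rho=\rho(A)$. For $t\in(0,\rho^{-1})$ let $R_t=(I-tA)^{-1}=(r_{ij}(t))$ and $d_t(i,j)=\tfrac12\bigl(\ln r_{ii}(t)+\ln r_{jj}(t)\bigr)-\ln r_{ij}(t)$. Then for all distinct $i,j\in V$ and all $t\in(0,\rho^{-1})$, $$d_t(i,j)=-\tfrac12\ln\Bigl(\bigl(t^{-1}I-A_{jj}\bigr)^{-1}_i\,a_{\setminus j\,j}\;\bigl(t^{-1}I-A_{ii}\bigr)^{-1}_j\,a_{\setminus i\,i}\Bigr).$$
   Context: $G$ may have loops and multiple edges; $A=(a_{ij})$ has $a_{ij}$ equal to the sum of weights of the edges joining $i$ and $j$. All matrices are indexed by the vertices. For a matrix $M$ and vertex $j$, $M_{jj}$ is the submatrix obtained by deleting row $j$ and column $j$ (its rows and columns remain indexed by $V\setminus\{j\}$); for an invertible matrix $N$, $N^{-1}_i$ denotes the row of $N^{-1}$ indexed by vertex $i$; $a_{\setminus j\,j}$ is the $j$th column of $A$ with the entry $a_{jj}$ removed (a vector indexed by $V\setminus\{j\}$). *)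

From HB Require Import structures.
From mathcomp Require Import all_boot all_order all_algebra.
From mathcomp Require Import all_classical all_reals all_analysis.
Set Implicit Arguments. Unset Strict Implicit. Unset Printing Implicit Defensive.
Import Order.TTheory GRing.Theory Num.Theory.
Local Open Scope ring_scope.
Local Open Scope classical_set_scope.

(* A weighted multigraph on the vertex set 'I_n is given by a finite list of
   edges (u, v, w): an edge joining u and v (a loop if u = v) with weight w. *)
Definition edge_joins (n : nat) (R : Type) (e : 'I_n * 'I_n * R) (i j : 'I_n) : bool :=
  ((e.1.1 == i) && (e.1.2 == j)) || ((e.1.1 == j) && (e.1.2 == i)).

Definition wadj (R : numDomainType) (n : nat) (E : seq ('I_n * 'I_n * R)) : 'M[R]_n :=
  \matrix_(i, j) \sum_(e <- E | edge_joins e i j) e.2.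

Definition pos_weights (R : numDomainType) (n : nat) (E : seq ('I_n * 'I_n * R)) : Prop :=
  forall e, e \in E -> 0 < e.2.

Definition gadj (R : Type) (n : nat) (E : seq ('I_n * 'I_n * R)) : rel 'I_n :=
  fun i j => has (fun e => edge_joins e i j) E.

Definition gconnected (R : Type) (n : nat) (E : seq ('I_n * 'I_n * R)) : Prop :=
  forall i j : 'I_n, connect (gadj E) i j.

(* spectral radius: sup of |lambda| over the eigenvalues lambda of A
   (A is real symmetric here, so all its eigenvalues are real). *)
Definition spectral_radius (R : realType) (n : nat) (A : 'M[R]_n) : R :=
  sup [set `|l| | l in [set l : R | eigenvalue A l]].

Definition resolvent (R : realType) (n : nat) (A : 'M[R]_n) (t : R) : 'M[R]_n :=
  invmx (1%:M - t *: A).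

Definition dist_t (R : realType) (n : nat) (A : 'M[R]_n) (t : R) (i j : 'I_n) : R :=
  let Rt := resolvent A t in
  2^-1 * (ln (Rt i i) + ln (Rt j j)) - ln (Rt i j).

(* A_jj : A with row j and column j deleted; its index k : 'I_n.-1 stands for
   the vertex lift j k of V \ {j}. *)
Definition del_mx (R : Type) (n : nat) (A : 'M[R]_n) (j : 'I_n) : 'M[R]_n.-1 :=
  \matrix_(k, l) A (lift j k) (lift j l).

Definition del_col (R : Type) (n : nat) (A : 'M[R]_n) (j : 'I_n) : 'cV[R]_n.-1 :=
  \col_k A (lift j k) j.

From HB Require Import structures.
From mathcomp Require Import all_boot all_order all_algebra.
From mathcomp Require Import all_classical all_reals all_analysis.
From mathcomp Require Import ring lra.

Set Implicit Arguments.
Unset Strict Implicit.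
Unset Printing Implicit Defensive.
Import Order.TTheory GRing.Theory Num.Theory.
Local Open Scope ring_scope.

(* For 0 < t < 1/rho the matrix M = I - tA is a Z-matrix (nonpositive
   off-diagonal entries) admitting a positive vector x with Mx > 0.  Such a
   matrix is invertible with a nonnegative inverse, and connectivity makes
   R_t = M^-1 entrywise positive.  Comparing the entries (v, j), v <> j, of
   M R_t = I gives
     (t^-1 I - A_jj) (column j of R_t without its entry r_jj) = r_jj a_{\j j},
   so the two factors in the statement are r_ij / r_jj and r_ji / r_ii, and
   r_ij = r_ji by symmetry of A. *)

Section ZMatrix.
Variables (R : realFieldType) (m : nat).
Implicit Types (M : 'M[R]_m) (x y : 'cV[R]_m).

Definition Zmatrix M := forall i j, i != j -> M i j <= 0.

Definition semipositive M x :=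
  (forall i, 0 < x i 0) /\ (forall i, 0 < (M *m x) i 0).

Variables (M : 'M[R]_m) (x : 'cV[R]_m).
Hypotheses (ZM : Zmatrix M) (Mx : semipositive M x).

(* If y has a negative entry, shift it by the least multiple c x making it
   nonnegative: y + c x then vanishes at some i0, which forces
   (M (y + c x)) i0 <= 0. *)
Lemma Zmatrix_monotone y :
  (forall i, 0 <= (M *m y) i 0) -> forall i, 0 <= y i 0.
Proof.
case: Mx => x_gt0 Mx_gt0 My_ge0 i; rewrite leNgt; apply/negP => yi_lt0.
pose f k := y k 0 / x k 0.
have [i0 _ f_min] := @arg_minP _ _ _ i xpredT f isT.
set c := - f i0.
have c_gt0 : 0 < c.
  rewrite oppr_gt0; apply: le_lt_trans (f_min i isT) _.
  by rewrite /f ltr_pdivrMr // mul0r.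
pose z := y + c *: x.
have z_ge0 k : 0 <= z k 0.
  rewrite !mxE (_ : y k 0 = f k * x k 0); last by rewrite /f divfK ?gt_eqF.
  by rewrite -mulrDl mulr_ge0 ?(ltW (x_gt0 k)) // /c subr_ge0 f_min.
have z_i0 : z i0 0 = 0 by rewrite !mxE /c /f mulNr divfK ?gt_eqF ?subrr.
have Mz_gt0 : 0 < (M *m z) i0 0.
  rewrite mulmxDr -scalemxAr mxE [X in _ + X]mxE.
  by rewrite ltr_wpDl ?My_ge0 // mulr_gt0.
have : (M *m z) i0 0 <= 0.
  rewrite mxE; apply: sumr_le0 => k _.
  have [<-|i0k] := eqVneq i0 k; first by rewrite z_i0 mulr0.
  by rewrite mulr_le0_ge0 // ZM.
by rewrite leNgt Mz_gt0.
Qed.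

Lemma Zmatrix_unit : M \in unitmx.
Proof.
apply/negPn/negP => nonunit.
have : kermx M^T != 0 by rewrite kermx_eq0 row_free_unit unitmx_tr.
case/rowV0Pn => v /sub_kermxP vM v_neq0.
have Mv : M *m v^T = 0 by rewrite -[M]trmxK -trmx_mul vM trmx0.
have Mv_ge0 i : 0 <= (M *m v^T) i 0 by rewrite Mv mxE.
have MNv_ge0 i : 0 <= (M *m - v^T) i 0 by rewrite mulmxN Mv oppr0 mxE.
case/eqP: v_neq0; apply/matrixP => i j; rewrite (ord1 i) mxE; apply/eqP.
rewrite eq_le; have := Zmatrix_monotone MNv_ge0 j; rewrite !mxE oppr_ge0 => ->.
by have := Zmatrix_monotone Mv_ge0 j; rewrite mxE.
Qed.

Lemma Zmatrix_invmx_ge0 i k : 0 <= invmx M i k.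
Proof.
have MN_ge0 l : 0 <= (M *m col k (invmx M)) l 0.
  by rewrite colE mulmxA mulmxV ?Zmatrix_unit // mul1mx mxE ler0n.
by have := Zmatrix_monotone MN_ge0 i; rewrite mxE.
Qed.

End ZMatrix.

Section PrincipalSubmatrix.
Variables (R : realFieldType) (m : nat) (M : 'M[R]_m) (j : 'I_m).

Lemma Zmatrix_del_mx : Zmatrix M -> Zmatrix (del_mx M j).
Proof. by move=> ZM p q pq; rewrite mxE ZM // (inj_eq lift_inj). Qed.

Lemma semipositive_del_mx x : Zmatrix M -> semipositive M x ->
  semipositive (del_mx M j) (\col_p x (lift j p) 0).
Proof.
move=> ZM [x_gt0 Mx_gt0]; split=> [p|p]; first by rewrite mxE.
have := Mx_gt0 (lift j p); rewrite mxE (bigD1_ord j) //= => /lt_le_trans; apply.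
rewrite [X in _ <= X]mxE; under [X in _ <= X]eq_bigr do rewrite !mxE.
by rewrite gerDr mulr_le0_ge0 ?(ltW (x_gt0 j)) // ZM // eq_sym neq_lift.
Qed.

End PrincipalSubmatrix.

Section OneSubScaled.
Variables (R : comUnitRingType) (m : nat) (A : 'M[R]_m).

Lemma mul_1_subZ_mxE s (x : 'cV[R]_m) i :
  ((1%:M - s *: A) *m x) i 0 = x i 0 - s * (A *m x) i 0.
Proof. by rewrite mulmxBl mul1mx -scalemxAl !mxE. Qed.

Lemma invmx_1_subZE t : (1%:M - t *: A) \in unitmx ->
  invmx (1%:M - t *: A) = 1%:M + t *: (A *m invmx (1%:M - t *: A)).
Proof.
move=> U; have /eqP := mulmxV U.
by rewrite mulmxBl mul1mx -scalemxAl subr_eq => /eqP.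
Qed.

Lemma del_mx_mul_col_invmx (M : 'M[R]_m) j : M \in unitmx ->
  del_mx M j *m (\col_p invmx M (lift j p) j)
    = - (invmx M j j *: \col_p M (lift j p) j).
Proof.
move=> U; apply/matrixP => p z; rewrite (ord1 z).
have := congr1 (fun N : 'M[R]_m => N (lift j p) j) (mulmxV U).
rewrite /= !mxE (bigD1_ord j) //= eq_sym (negbTE (neq_lift j p)) mulr0n.
move/eqP; rewrite addrC addr_eq0 mulrC => /eqP <-.
by apply: eq_bigr => q _; rewrite !mxE.
Qed.

End OneSubScaled.

Section FieldResolvent.
Variables (F : fieldType) (m : nat) (A : 'M[F]_m) (t : F) (j : 'I_m).
Hypothesis t_neq0 : t != 0.

Lemma del_mx_1_subZ :
  del_mx (1%:M - t *: A) j = t *: (t^-1%:M - del_mx A j).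
Proof.
apply/matrixP => p q; rewrite !mxE (inj_eq lift_inj) mulrBr.
by case: (p == q); rewrite ?mulr1n ?mulr0n ?mulfV ?mulr0.
Qed.

Lemma invmx_del_col : let N := invmx (1%:M - t *: A) in
  (1%:M - t *: A) \in unitmx -> (t^-1%:M - del_mx A j) \in unitmx ->
  N j j != 0 ->
  invmx (t^-1%:M - del_mx A j) *m del_col A j
    = (N j j)^-1 *: \col_p N (lift j p) j.
Proof.
move=> N U UK Njj_neq0.
have col_1_subZ : \col_p (1%:M - t *: A) (lift j p) j = - t *: del_col A j.
  apply/matrixP => p z.
  by rewrite !mxE eq_sym (negbTE (neq_lift j p)) sub0r mulNr.
have K_col : (t^-1%:M - del_mx A j) *m (\col_p N (lift j p) j)
    = N j j *: del_col A j.
  apply: (scalerI t_neq0); rewrite scalemxAl -del_mx_1_subZ.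
  rewrite del_mx_mul_col_invmx // col_1_subZ scaleNr scalerN opprK.
  by rewrite !scalerA mulrC.
rewrite -[del_col A j](scalerK Njj_neq0) -K_col -scalemxAr mulmxA.
by rewrite mulVmx // mul1mx.
Qed.

End FieldResolvent.

Lemma mul_1_subZ_gt0_near (R : realFieldType) (m : nat) (A : 'M[R]_m) s
    (x : 'cV[R]_m) :
  (forall i, ((1%:M - s *: A) *m x) i 0 = 1) ->
  exists2 e : R, 0 < e &
    forall s' i, `|s' - s| < e -> 0 < ((1%:M - s' *: A) *m x) i 0.
Proof.
move=> Mx1; pose C := 1 + \sum_i `|(A *m x) i 0|.
have C_gt0 : 0 < C by rewrite ltr_pwDl ?sumr_ge0.
have AxC i : `|(A *m x) i 0| <= C.
  by rewrite /C (bigD1 i) //= ler_wpDl // lerDl sumr_ge0.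
exists C^-1 => [|s' i ss']; first by rewrite invr_gt0.
have -> : ((1%:M - s' *: A) *m x) i 0 = 1 + (s - s') * (A *m x) i 0.
  by rewrite mul_1_subZ_mxE -[X in _ = X + _](Mx1 i) mul_1_subZ_mxE; ring.
have : `|(s - s') * (A *m x) i 0| < 1.
  rewrite normrM distrC; apply: le_lt_trans (ler_wpM2l _ (AxC i)) _ => //.
  by rewrite -ltr_pdivlMr // div1r.
rewrite ltr_norml => /andP [lt _]; lra.
Qed.

Section NonnegativeMatrix.
Variables (R : realFieldType) (m : nat) (A : 'M[R]_m).
Hypothesis A_ge0 : forall i j, 0 <= A i j.

Lemma Zmatrix_1_subZ s : 0 <= s -> Zmatrix (1%:M - s *: A).
Proof.
by move=> s_ge0 i j ij; rewrite !mxE (negbTE ij) mulr0n sub0r oppr_le0 mulr_ge0.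
Qed.

Lemma invmx_1_subZ_gt0_connect t x (adj : rel 'I_m) :
  0 < t -> semipositive (1%:M - t *: A) x ->
  (forall a b, adj a b -> 0 < A b a) ->
  forall k i, connect adj k i -> 0 < invmx (1%:M - t *: A) i k.
Proof.
move=> t_gt0 Mx adjA k i /connectP [p + ->] {i}.
have ZM := Zmatrix_1_subZ (ltW t_gt0).
have N_ge0 := Zmatrix_invmx_ge0 ZM Mx.
set N := invmx _ in N_ge0 *.
have NE a : N a k = (a == k)%:R + t * \sum_l A a l * N l k.
  have N_eq := invmx_1_subZE (Zmatrix_unit ZM Mx).
  by have := congr1 (fun B : 'M[R]_m => B a k) N_eq; rewrite -/N !mxE.
have sum_ge l a : A a l * N l k <= \sum_b A a b * N b k.
  by rewrite (bigD1 l) //= lerDl sumr_ge0 // => b _; rewrite mulr_ge0.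
have Nkk_gt0 : 0 < N k k.
  rewrite NE eqxx ltr_pwDl ?ltr01 // mulr_ge0 ?(ltW t_gt0) //.
  by apply: le_trans (sum_ge k k); rewrite mulr_ge0.
suff : forall a, 0 < N a k -> path adj a p -> 0 < N (last a p) k by apply.
elim: p => [|b p IH] a Nak_gt0 //= /andP [ab pth]; apply: IH pth.
have : t * (A b a * N a k) <= N b k.
  rewrite (NE b) -[X in X <= _]add0r lerD ?ler0n //.
  by rewrite ler_wpM2l ?(ltW t_gt0) ?sum_ge.
by apply: lt_le_trans; rewrite !mulr_gt0 ?adjA.
Qed.

Lemma unitmx_inv_sub_del_mx t x j : 0 < t -> semipositive (1%:M - t *: A) x ->
  (t^-1%:M - del_mx A j) \in unitmx.
Proof.
move=> t_gt0 Mx; have t_neq0 := lt0r_neq0 t_gt0.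
have ZM := Zmatrix_1_subZ (ltW t_gt0).
have := Zmatrix_unit (Zmatrix_del_mx j ZM) (semipositive_del_mx j ZM Mx).
by rewrite del_mx_1_subZ // unitmxZ // unitfE.
Qed.

End NonnegativeMatrix.

Section SpectralRadius.
Local Open Scope classical_set_scope.
Variables (R : realType) (m : nat) (A : 'M[R]_m).

Lemma eigenvalue_norm_le l : eigenvalue A l -> `|l| <= \sum_i \sum_j `|A i j|.
Proof.
case/eigenvalueP => v vA v_neq0.
have [k0 vk0_neq0] : exists k, v 0 k != 0.
  apply/existsP; apply: contraNT v_neq0; rewrite negb_exists => /forallP v0.
  by apply/eqP/matrixP => i k; rewrite (ord1 i) mxE; apply/eqP/negPn.
have [k _ v_max] := @arg_maxP _ _ _ k0 xpredT (fun k => `|v 0 k|) isT.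
have vk_gt0 : 0 < `|v 0 k| by rewrite (lt_le_trans _ (v_max k0 isT)) ?normr_gt0.
have lvk : l * v 0 k = \sum_i v 0 i * A i k.
  by have := congr1 (fun B : 'rV[R]_m => B 0 k) vA; rewrite !mxE => <-.
rewrite -(ler_pM2r vk_gt0) -normrM lvk mulrC.
apply: le_trans (ler_norm_sum _ _ _) _; rewrite mulr_sumr.
apply: ler_sum => i _; rewrite normrM ler_pM //; first exact: v_max.
by rewrite (bigD1 k) //= lerDl sumr_ge0.
Qed.

Lemma unitmx_1_subZ s : 0 <= s -> s < (spectral_radius A)^-1 ->
  (1%:M - s *: A) \in unitmx.
Proof.
move=> s_ge0 s_lt.
have [->|s_neq0] := eqVneq s 0; first by rewrite scale0r subr0 unitmx1.
have s_gt0 : 0 < s by rewrite lt_def s_neq0.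
apply/negPn/negP => nonunit.
have ev : eigenvalue A s^-1.
  rewrite /eigenvalue /eigenspace kermx_eq0 row_free_unit.
  have -> : A - s^-1%:M = (- s^-1) *: (1%:M - s *: A).
    by rewrite scalerBr !scaleNr opprK scalerA mulVf // scale1r scalemx1 addrC.
  by rewrite unitmxZ // unitfE oppr_eq0 invr_eq0.
have : `|s^-1| <= spectral_radius A.
  apply: sup_upper_bound; last by exists s^-1.
  split; first by exists `|s^-1|, s^-1.
  by exists (\sum_i \sum_j `|A i j|) => _ [l /eigenvalue_norm_le le <-].
rewrite gtr0_norm ?invr_gt0 // => le_rho.
have rho_gt0 : 0 < spectral_radius A.
  by apply: lt_le_trans le_rho; rewrite invr_gt0.
by move: s_lt; rewrite invf_pgt ?posrE // ltNge le_rho.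
Qed.

(* Continuity argument: let s0 be the supremum of the admissible s in [0, t].
   The vector x = (I - s0 A)^-1 1 satisfies (I - sA) x > 0 for s near s0, and
   x > 0 by comparison with the vector admissible at some s close to s0; so x
   is admissible near s0, which forces s0 = t. *)
Lemma semipositive_1_subZ t : (forall i j, 0 <= A i j) ->
  0 <= t -> t < (spectral_radius A)^-1 ->
  exists x, semipositive (1%:M - t *: A) x.
Proof.
move=> A_ge0 t_ge0 t_lt.
pose S := [set s : R | 0 <= s <= t /\ exists x, semipositive (1%:M - s *: A) x].
have S0 : S 0.
  split; first by rewrite lexx t_ge0.
  exists (const_mx 1); split=> i; first by rewrite mxE ltr01.
  by rewrite scale0r subr0 mul1mx mxE ltr01.
have supS : has_sup S by split; [exists 0 | exists t => s [/andP [_ ?] _]].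
set s0 := sup S.
have s0_ge0 : 0 <= s0 := sup_upper_bound supS S0.
have s0_le : s0 <= t by apply: ge_sup; [exists 0 | move=> s [/andP [_ ?] _]].
have U := unitmx_1_subZ s0_ge0 (le_lt_trans s0_le t_lt).
pose x : 'cV[R]_m := invmx (1%:M - s0 *: A) *m const_mx 1.
have Mx1 i : ((1%:M - s0 *: A) *m x) i 0 = 1.
  by rewrite /x mulmxA mulmxV // mul1mx mxE.
have [e e_gt0 x_near] := mul_1_subZ_gt0_near Mx1.
have x_gt0 i : 0 < x i 0.
  have [s Ss lt_s] := sup_adherent e_gt0 supS.
  have s_le := sup_upper_bound supS Ss.
  case: Ss => /andP [s_ge0 _] [y My].
  have Mx_gt0 k : 0 < ((1%:M - s *: A) *m x) k 0.
    apply: x_near; rewrite distrC ger0_norm ?subr_ge0 //.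
    by move: lt_s; rewrite -/s0; lra.
  have ZM := Zmatrix_1_subZ A_ge0 s_ge0.
  have x_ge0 := Zmatrix_monotone ZM My (fun k => ltW (Mx_gt0 k)).
  have := Mx_gt0 i; rewrite mul_1_subZ_mxE subr_gt0; apply: le_lt_trans.
  by rewrite mulr_ge0 // mxE sumr_ge0 // => k _; rewrite mulr_ge0.
have [t_near | t_far] := ltP (t - s0) e.
  by exists x; split=> // i; apply: x_near; rewrite ger0_norm // subr_ge0.
have : S (s0 + e / 2).
  split; first by apply/andP; split; lra.
  exists x; split=> // i; apply: x_near.
  by rewrite addrAC subrr add0r ger0_norm; lra.
move/(sup_upper_bound supS); rewrite -/s0; lra.
Qed.

End SpectralRadius.

Section WeightedAdjacency.
Variables (R : numDomainType) (n : nat) (E : seq ('I_n * 'I_n * R)).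

Lemma trmx_wadj : (wadj E)^T = wadj E.
Proof.
apply/matrixP => i j; rewrite !mxE; apply: eq_bigl => e.
by rewrite /edge_joins orbC.
Qed.

Hypothesis E_pos : pos_weights E.

Lemma wadj_ge0 i j : 0 <= wadj E i j.
Proof.
rewrite mxE big_seq_cond; apply: sumr_ge0 => e /andP [eE _].
exact: ltW (E_pos eE).
Qed.

Lemma wadj_gt0 i j : gadj E i j -> 0 < wadj E i j.
Proof.
case/hasP => e eE eij; rewrite lt_def wadj_ge0 andbT mxE big_seq_cond.
rewrite psumr_neq0 => [|f /andP [fE _]]; last exact: ltW (E_pos fE).
by apply/hasP; exists e; rewrite ?eE ?eij ?E_pos.
Qed.

End WeightedAdjacency.

Lemma resolvent_sym (R : realType) (n : nat) (A : 'M[R]_n) t i j :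
  A^T = A -> resolvent A t i j = resolvent A t j i.
Proof.
move=> A_sym; have M_sym : (1%:M - t *: A)^T = 1%:M - t *: A.
  by rewrite linearB /= trmx1 linearZ /= A_sym.
by rewrite /resolvent -[in RHS]M_sym -trmx_inv mxE.
Qed.

Lemma resolvent_gt0 (R : realType) (n : nat) (E : seq ('I_n * 'I_n * R)) t :
  pos_weights E -> gconnected E ->
  0 < t -> t < (spectral_radius (wadj E))^-1 ->
  forall i j, 0 < resolvent (wadj E) t i j.
Proof.
move=> E_pos E_conn t_gt0 t_lt i j.
have [x Mx] := semipositive_1_subZ (wadj_ge0 E_pos) (ltW t_gt0) t_lt.
apply: (invmx_1_subZ_gt0_connect (wadj_ge0 E_pos) t_gt0 Mx _ (E_conn j i)).
by move=> a b ab; rewrite -trmx_wadj mxE wadj_gt0.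
Qed.

Theorem theorem2 (R : realType) (n : nat) (E : seq ('I_n * 'I_n * R)) :
  (2 <= n)%N -> pos_weights E -> gconnected E ->
  let A := wadj E in
  let rho := spectral_radius A in
  forall (i j : 'I_n), i != j ->
  forall (k : 'I_n.-1) (l : 'I_n.-1), lift j k = i -> lift i l = j ->
  forall t : R, 0 < t -> t < rho^-1 ->
  dist_t A t i j =
    - 2^-1 * ln ((invmx (t^-1%:M - del_mx A j) *m del_col A j) k 0
                 * (invmx (t^-1%:M - del_mx A i) *m del_col A i) l 0).
Proof.
move=> _ E_pos E_conn A rho i j _ k l ki lj t t_gt0 t_lt.
have A_ge0 := wadj_ge0 E_pos.
have [x Mx] := semipositive_1_subZ A_ge0 (ltW t_gt0) t_lt.
have N_gt0 := resolvent_gt0 E_pos E_conn t_gt0 t_lt.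
have del_col_ratio a c :
    (invmx (t^-1%:M - del_mx A a) *m del_col A a) c 0
      = (resolvent A t a a)^-1 * resolvent A t (lift a c) a.
  have U := Zmatrix_unit (Zmatrix_1_subZ A_ge0 (ltW t_gt0)) Mx.
  have UK := unitmx_inv_sub_del_mx A_ge0 a t_gt0 Mx.
  by rewrite invmx_del_col ?lt0r_neq0 ?N_gt0 // !mxE.
rewrite !del_col_ratio ki lj (resolvent_sym _ j i (trmx_wadj E)) /dist_t /=.
rewrite !lnM ?posrE ?mulr_gt0 ?invr_gt0 ?N_gt0 // !lnV ?posrE ?N_gt0 //.
lra.
Qed.
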